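(* Let $d>1$, let $E,F$ be complex elliptic curves, let $P\in E[d]$ and $Q\in F[d]$ be points of order exactly $d$, let $A=(E\times F)/\langle (P,Q)\rangle$ with quotient map $\mu$, and let $H$ be the polarisation on $A$ with $\mu^*H=\mathcal O_E(d\cdot 0)\boxtimes\mathcal O_F(d\cdot 0)$ (a polarisation of type $(1,d)$), with polarisation isogeny $\phi_H:A\to\hat A$. Identify $E$ with $\mu(E\times\{0\})$, $F$ with $\mu(\{0\}\times F)$, $P$ with $\mu(P,0)$ and $Q$ with $\mu(0,Q)$. Then $Q=-P$ in $A$, $E\cap F=\langle P\rangle\subseteq\ker\phi_H$, and $E\cap\ker\phi_H=F\cap\ker\phi_H=\langle P\rangle$. *)

From HB Require Import structures.
From mathcomp Require Import all_boot all_order all_algebra.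
From mathcomp Require Import complex.
From mathcomp Require Import reals.
Set Implicit Arguments. Unset Strict Implicit. Unset Printing Implicit Defensive.
Import Order.TTheory GRing.Theory Num.Theory.
Local Open Scope ring_scope.
Local Open Scope complex_scope.

Section Defs.
Variable R : realType.
Local Notation C := R[i].

(* The lattice Z w1 + Z w2 in C; E = C / lat w1 w2 is a complex elliptic
   curve when 0 < Im (w1^* * w2) (w1, w2 an oriented R-basis of C). *)
Definition lat (w1 w2 : C) (z : C) : Prop :=
  exists a b : int, z = a%:~R * w1 + b%:~R * w2.

Definition order_exactly (L : C -> Prop) (d : nat) (p : C) : Prop :=
  L (d%:R * p) /\ forall k : nat, (0 < k < d)%N -> ~ L (k%:R * p).

(* Hermitian form (Appell-Humbert) of O_E(0) on E = C / lat w1 w2 :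
   H(z,w) = z conj(w) / Im(conj(w1) w2); its imaginary part is the
   unimodular alternating form on the lattice. *)
Definition ppol (w1 w2 : C) (z w : C) : C :=
  z * w^* / ((complex.Im (w1^* * w2) : R)%:C).

(* The lattice of A = (E x F)/<(P,Q)> inside C^2 = universal cover of A:
   Lambda_A = (L_E x L_F) + Z (p,q). *)
Definition quot_lattice (e1 e2 f1 f2 p q : C) (v : C * C) : Prop :=
  exists k : int, lat e1 e2 (v.1 - k%:~R * p) /\ lat f1 f2 (v.2 - k%:~R * q).

Definition congA (Lam : C * C -> Prop) (v w : C * C) : Prop :=
  Lam (v.1 - w.1, v.2 - w.2).

(* Hermitian form of H on C^2 (the same as that of mu^* H), where
   mu^* H = O_E(d.0) boxtimes O_F(d.0) *)
Definition pol_form (d : nat) (e1 e2 f1 f2 : C) (v w : C * C) : C :=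
  d%:R * ppol e1 e2 v.1 w.1 + d%:R * ppol f1 f2 v.2 w.2.

(* v mod Lam lies in ker phi_H, where phi_H : A -> hat A, v |-> H(v, .)
   and hat A = (antilinear forms) / {l | Im l(Lam) subset Z}. *)
Definition inKer (Lam : C * C -> Prop) (H : C * C -> C * C -> C) (v : C * C) : Prop :=
  forall l, Lam l -> exists k : int, complex.Im (H v l) = k%:~R.

Definition onE (Lam : C * C -> Prop) (v : C * C) : Prop :=
  exists z : C, congA Lam v (z, 0).
Definition onF (Lam : C * C -> Prop) (v : C * C) : Prop :=
  exists z : C, congA Lam v (0, z).
Definition inSub (Lam : C * C -> Prop) (p : C) (v : C * C) : Prop :=
  exists k : int, congA Lam v (k%:~R * p, 0).

End Defs.

(* On E = C / L_E the imaginary part of the Hermitian form of O_E(0) is the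
   unimodular alternating form w_E (w_E(e1, e2) = -1), and Im H = d w_E + d w_F
   on C^2.  The lattice of A is L_E x L_F + Z (p, q), so a point (x, y) with
   y in <q> lies in ker phi_H iff x is d-torsion and d w_E(x, p) is an integer,
   since d w_F is integral on <q> x <q>.  Writing d x = (x1, x2) and
   d p = (a, b) in the basis of L_E, the last condition reads d | a x2 - b x1;
   as p has exact order d, (a, b) is primitive modulo d, and Bezout then gives
   x = n p modulo L_E.  Hence E meets ker phi_H in <P>, symmetrically for F, and
   the other claims are bookkeeping in the lattice of A. *)

From HB Require Import structures.
From mathcomp Require Import all_boot all_order all_algebra.
From mathcomp Require Import complex reals ring.
Set Implicit Arguments.
Unset Strict Implicit.
Unset Printing Implicit Defensive.
Import Order.TTheory GRing.Theory Num.Theory.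
Local Open Scope ring_scope.
Local Open Scope complex_scope.

Lemma dvdz_det_colinear (d a b x y : int) :
  coprimez (gcdz a b) d -> (d %| a * y - b * x)%Z ->
  exists n : int, (d %| x - n * a)%Z /\ (d %| y - n * b)%Z.
Proof.
have [u [v <-]] := Bezoutz a b.
move=> /coprimezP[[g w] /= Hbez] /dvdzP[c Hc].
have bezout t : t = t * (g * (u * a + v * b) + w * d) by rewrite Hbez mulr1.
exists (g * u * x + g * v * y); split; apply/dvdzP.
- exists (w * x - g * v * c).
  transitivity (w * x * d - g * v * (c * d)); last by ring.
  by rewrite -Hc {1}(bezout x); ring.
- exists (w * y + g * u * c).
  transitivity (w * y * d + g * u * (c * d)); last by ring.
  by rewrite -Hc {1}(bezout y); ring.
Qed.

Lemma complex_intr (R : realType) (k : int) : (k%:~R : R[i]) = (k%:~R : R)%:C.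
Proof. by rewrite rmorph_int. Qed.

Definition in_cyclic (R : realType) (L : R[i] -> Prop) (p x : R[i]) : Prop :=
  exists m : int, L (x - m%:~R * p).

Section RiemannForm.
Variables (R : realType) (e1 e2 : R[i]).
Local Notation L := (lat e1 e2).

Definition riemann_form (z w : R[i]) : R := complex.Im (ppol e1 e2 z w).
Local Notation om := riemann_form.

Lemma riemann_formE z w : om z w =
  (complex.Im z * complex.Re w - complex.Re z * complex.Im w)
  / complex.Im (e1^* * e2).
Proof.
rewrite /riemann_form /ppol -fmorphV.
case: z => a b; case: w => c d; case: e1 => x y; case: e2 => u v.
by simpc; rewrite /=; ring.
Qed.

Lemma riemann_formDl z1 z2 w : om (z1 + z2) w = om z1 w + om z2 w.
Proof. by rewrite !riemann_formE; case: z1 z2 w => [? ?] [? ?] [? ?] /=; ring. Qed.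

Lemma riemann_formDr z w1 w2 : om z (w1 + w2) = om z w1 + om z w2.
Proof. by rewrite !riemann_formE; case: z w1 w2 => [? ?] [? ?] [? ?] /=; ring. Qed.

Lemma riemann_formZl r z w : om (r%:C * z) w = r * om z w.
Proof. by rewrite !riemann_formE; case: z w => [? ?] [? ?] /=; ring. Qed.

Lemma riemann_formZr r z w : om z (r%:C * w) = r * om z w.
Proof. by rewrite !riemann_formE; case: z w => [? ?] [? ?] /=; ring. Qed.

Lemma riemann_formC z w : om w z = - om z w.
Proof. by rewrite !riemann_formE; case: z w => [? ?] [? ?] /=; ring. Qed.

Lemma riemann_formxx z : om z z = 0.
Proof. by rewrite !riemann_formE; case: z => [? ?] /=; ring. Qed.

Lemma riemann_form0r z : om z 0 = 0.
Proof. by rewrite riemann_formE /= !mulr0 subrr mul0r. Qed.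

Lemma riemann_formMzl (k : int) z w : om (k%:~R * z) w = k%:~R * om z w.
Proof. by rewrite complex_intr riemann_formZl. Qed.

Lemma riemann_formMzr (k : int) z w : om z (k%:~R * w) = k%:~R * om z w.
Proof. by rewrite complex_intr riemann_formZr. Qed.

Lemma riemann_formMnl (n : nat) z w : om (n%:R * z) w = n%:R * om z w.
Proof. exact: (riemann_formMzl n). Qed.

Lemma riemann_formMnr (n : nat) z w : om z (n%:R * w) = n%:R * om z w.
Proof. exact: (riemann_formMzr n). Qed.

Hypothesis e_nondeg : complex.Im (e1^* * e2) != 0.

Lemma riemann_form_det (x y a b : R) :
  om (x%:C * e1 + y%:C * e2) (a%:C * e1 + b%:C * e2) = a * y - b * x.
Proof.
rewrite riemann_formDl !riemann_formDr !riemann_formZl !riemann_formZr.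
rewrite !riemann_formxx (riemann_formC e2) !riemann_formE.
move: e_nondeg; case: e1 e2 => [? ?] [? ?]; simpc => /= nz.
by field.
Qed.

Lemma lat0 : L 0.
Proof. by exists 0, 0; ring. Qed.

Lemma lat_e1 : L e1.
Proof. by exists 1, 0; ring. Qed.

Lemma lat_e2 : L e2.
Proof. by exists 0, 1; ring. Qed.

Lemma riemann_form_lat_int z w : L z -> L w -> om z w \is a Num.int.
Proof.
move=> [x [y ->]] [a [b ->]]; rewrite !complex_intr riemann_form_det.
by rewrite rpredB ?rpredM ?rpred_int.
Qed.

Lemma lat_of_riemann_form_int z : (forall w, L w -> om z w \is a Num.int) -> L z.
Proof.
move=> zL; have /intrP[x hx] := zL _ lat_e2; have /intrP[y hy] := zL _ lat_e1.
have -> : z = (- om z e2)%:C * e1 + (om z e1)%:C * e2.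
  rewrite !riemann_formE; move: e_nondeg; clear zL hx hy.
  by case: z e1 e2 => [? ?] [? ?] [? ?]; simpc => /= nz; congr (_ +i* _); field.
by exists (- x), y; rewrite hx hy -rmorphN -!complex_intr.
Qed.

End RiemannForm.

Section Torsion.
Variables (R : realType) (e1 e2 : R[i]) (d : nat) (p : R[i]).
Hypothesis e_nondeg : complex.Im (e1^* * e2) != 0.
Local Notation L := (lat e1 e2).
Local Notation om := (riemann_form e1 e2).

Lemma in_cyclic_self : in_cyclic L p p.
Proof. by exists 1; rewrite mul1r subrr; apply: lat0. Qed.

Lemma in_cyclic_isotropic x y : L (d%:R * p) ->
  in_cyclic L p x -> in_cyclic L p y -> d%:R * om x y \is a Num.int.
Proof.
move=> Ldp [m Lx] [j Ly].
rewrite -(subrK (m%:~R * p) x) -(subrK (j%:~R * p) y).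
move: (x - _) (y - _) Lx Ly => u v Lu Lv.
have uv : om u v \is a Num.int by apply: riemann_form_lat_int.
have up : d%:R * om u p \is a Num.int.
  by rewrite -riemann_formMnr; apply: riemann_form_lat_int.
have pv : d%:R * om p v \is a Num.int.
  by rewrite -riemann_formMnl; apply: riemann_form_lat_int.
rewrite riemann_formDl !riemann_formDr !riemann_formMzl !riemann_formMzr.
rewrite riemann_formxx !mulr0 addr0 mulrDr mulrDr !(mulrCA d%:R).
by rewrite !rpredD // rpredM ?rpred_nat ?rpred_int.
Qed.

Lemma order_exactly_coprime_coords : (0 < d)%N -> order_exactly L d p ->
  exists a b : int,
    d%:R * p = a%:~R * e1 + b%:~R * e2 /\ coprimez (gcdz a b) d.
Proof.
move=> d_gt0 [[a [b dp]] d_min]; exists a, b; split=> //.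
rewrite /coprimez /gcdz absz_nat /=; set g := gcdn _ d.
have g_gt0 : (0 < g)%N by rewrite gcdn_gt0 d_gt0 orbT.
have g_d : (g %| d)%N := dvdn_gcdr _ _.
have g_a : (g%:Z %| a)%Z.
  by rewrite dvdzE (dvdn_trans (dvdn_gcdl _ _) (dvdn_gcdl _ _)).
have g_b : (g%:Z %| b)%Z.
  by rewrite dvdzE (dvdn_trans (dvdn_gcdl _ _) (dvdn_gcdr _ _)).
case: (ltngtP g 1) => [|g_gt1|-> //]; first by rewrite ltnNge g_gt0.
exfalso.
apply: (d_min (d %/ g)%N).
  by rewrite divn_gt0 // dvdn_leq //= ltn_Pdiv.
exists (a %/ g%:Z)%Z, (b %/ g%:Z)%Z.
apply: (@mulfI _ (g%:R : R[i])); first by rewrite pnatr_eq0 -lt0n.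
rewrite mulrA -natrM mulnC divnK // dp -{1}(divzK g_a) -{1}(divzK g_b).
by rewrite !rmorphM /=; ring.
Qed.

Lemma in_cyclic_of_int_pairing w : (0 < d)%N -> order_exactly L d p ->
  (forall z, L z -> d%:R * om w z \is a Num.int) ->
  d%:R * om w p \is a Num.int -> in_cyclic L p w.
Proof.
move=> d_gt0 ordp wL /intrP[t wp].
have [x [y dw]] : L (d%:R * w).
  by apply: lat_of_riemann_form_int => // z Lz; rewrite riemann_formMnl wL.
have [a [b [dp cop]]] := order_exactly_coprime_coords d_gt0 ordp.
have det : (d%:Z %| a * y - b * x)%Z.
  apply/dvdzP; exists t; apply: (@intr_inj R).
  rewrite rmorphB !rmorphM /= -(riemann_form_det e_nondeg).
  by rewrite -!complex_intr -dw -dp riemann_formMnl riemann_formMnr wp; ring.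
have [n [/dvdzP[c1 xn] /dvdzP[c2 yn]]] := dvdz_det_colinear cop det.
exists n, c1, c2.
apply: (@mulfI _ (d%:R : R[i])); first by rewrite pnatr_eq0 -lt0n.
transitivity (d%:R * w - n%:~R * (d%:R * p)); first by ring.
rewrite dw dp.
transitivity ((x - n * a)%:~R * e1 + (y - n * b)%:~R * e2).
  by rewrite !rmorphB !rmorphM /=; ring.
by rewrite xn yn !rmorphM /=; ring.
Qed.

End Torsion.

Section QuotientLattice.
Variables (R : realType) (d : nat) (e1 e2 f1 f2 p q : R[i]).
Local Notation LE := (lat e1 e2).
Local Notation LF := (lat f1 f2).
Local Notation Lam := (quot_lattice e1 e2 f1 f2 p q).
Local Notation H := (pol_form d e1 e2 f1 f2).
Local Notation omE := (riemann_form e1 e2).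
Local Notation omF := (riemann_form f1 f2).

Lemma quot_lattice_l z : LE z -> Lam (z, 0).
Proof.
by move=> Lz; exists 0; rewrite /= mulr0z !mul0r !subr0; split=> //; apply: lat0.
Qed.

Lemma quot_lattice_r z : LF z -> Lam (0, z).
Proof.
by move=> Lz; exists 0; rewrite /= mulr0z !mul0r !subr0; split=> //; apply: lat0.
Qed.

Lemma quot_lattice_pq : Lam (p, q).
Proof. by exists 1; rewrite /= mulr1z !mul1r !subrr; split; apply: lat0. Qed.

Lemma cong_q_opp_p : congA Lam (0, q) (- p, 0).
Proof. by rewrite /congA /= sub0r opprK subr0; apply: quot_lattice_pq. Qed.

Lemma inSubP v : inSub Lam p v <-> in_cyclic LE p v.1 /\ in_cyclic LF q v.2.
Proof.
case: v => v1 v2; split=> [[n [k /= [Ev Fv]]] | [[m Ev] [k Fv]]].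
  split; last by exists k; rewrite -(subr0 v2).
  by exists (n + k); rewrite intrD mulrDl opprD addrA.
exists (m - k), k; split=> //=; last by rewrite subr0.
by rewrite intrB mulrBl -addrA -opprD subrK.
Qed.

Lemma onEP v : onE Lam v <-> in_cyclic LF q v.2.
Proof.
case: v => v1 v2; split=> [[z [k /= [_ Fv]]] | [k Fv]].
  by exists k; rewrite -(subr0 v2).
exists (v1 - k%:~R * p), k; split=> /=; last by rewrite subr0.
by rewrite -addrA -opprD subrK subrr; apply: lat0.
Qed.

Lemma onFP v : onF Lam v <-> in_cyclic LE p v.1.
Proof.
case: v => v1 v2; split=> [[z [k /= [Ev _]]] | [m Ev]].
  by exists k; rewrite -(subr0 v1).
exists (v2 - m%:~R * q), m; split=> /=; first by rewrite subr0.
by rewrite -addrA -opprD subrK subrr; apply: lat0.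
Qed.

Lemma Im_pol_form v l :
  complex.Im (H v l) = d%:R * omE v.1 l.1 + d%:R * omF v.2 l.2.
Proof.
rewrite /pol_form /riemann_form -[d%:R](rmorph_nat (real_complex R)).
by case: (ppol e1 e2 _ _) (ppol f1 f2 _ _) => [? ?] [? ?]; simpc.
Qed.

Lemma inKerP v : inKer Lam H v <->
  forall l, Lam l -> d%:R * omE v.1 l.1 + d%:R * omF v.2 l.2 \is a Num.int.
Proof.
split=> vK l Ll; first by apply/intrP; rewrite -Im_pol_form; apply: vK.
by rewrite Im_pol_form; apply/intrP; apply: vK.
Qed.

Lemma inKer_l v z : inKer Lam H v -> LE z -> d%:R * omE v.1 z \is a Num.int.
Proof.
move=> /inKerP vK Lz; have := vK _ (quot_lattice_l Lz).
by rewrite riemann_form0r mulr0 addr0.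
Qed.

Lemma inKer_r v z : inKer Lam H v -> LF z -> d%:R * omF v.2 z \is a Num.int.
Proof.
move=> /inKerP vK Lz; have := vK _ (quot_lattice_r Lz).
by rewrite riemann_form0r mulr0 add0r.
Qed.

Lemma onE_onFP v : onE Lam v /\ onF Lam v <-> inSub Lam p v.
Proof.
split=> [[/onEP Fv /onFP Ev] | /inSubP[Ev Fv]]; first exact/inSubP.
by split; [apply/onEP | apply/onFP].
Qed.

Hypotheses (e_nondeg : complex.Im (e1^* * e2) != 0)
           (f_nondeg : complex.Im (f1^* * f2) != 0).

Lemma inSub_inKer v : LE (d%:R * p) -> LF (d%:R * q) ->
  inSub Lam p v -> inKer Lam H v.
Proof.
move=> Ldp Ldq /inSubP[Ev Fv]; apply/inKerP => -[l1 l2] [j [El Fl]].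
apply: rpredD; [apply: (in_cyclic_isotropic e_nondeg Ldp Ev) |
               apply: (in_cyclic_isotropic f_nondeg Ldq Fv)]; by exists j.
Qed.

Hypotheses (d_gt0 : (0 < d)%N)
           (ordp : order_exactly LE d p) (ordq : order_exactly LF d q).

Lemma onE_inKer_inSub v : onE Lam v -> inKer Lam H v -> inSub Lam p v.
Proof.
move=> /onEP Fv vK; apply/inSubP; split=> //.
apply: (in_cyclic_of_int_pairing e_nondeg d_gt0 ordp) => [z|]; first exact: inKer_l.
have Fq := in_cyclic_isotropic f_nondeg ordq.1 Fv (in_cyclic_self f1 f2 q).
by rewrite -(rpredDr _ Fq); move/inKerP: vK => /(_ _ quot_lattice_pq).
Qed.

Lemma onF_inKer_inSub v : onF Lam v -> inKer Lam H v -> inSub Lam p v.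
Proof.
move=> /onFP Ev vK; apply/inSubP; split=> //.
apply: (in_cyclic_of_int_pairing f_nondeg d_gt0 ordq) => [z|]; first exact: inKer_r.
have Ep := in_cyclic_isotropic e_nondeg ordp.1 Ev (in_cyclic_self e1 e2 p).
by rewrite -(rpredDl _ Ep); move/inKerP: vK => /(_ _ quot_lattice_pq).
Qed.

End QuotientLattice.

Theorem lemma2p4 (R : realType) (d : nat) (e1 e2 f1 f2 p q : R[i]) :
  (1 < d)%N ->
  0 < complex.Im (e1^* * e2) -> 0 < complex.Im (f1^* * f2) ->
  order_exactly (lat e1 e2) d p -> order_exactly (lat f1 f2) d q ->
  let Lam := quot_lattice e1 e2 f1 f2 p q in
  let H := pol_form d e1 e2 f1 f2 in
  congA Lam (0, q) (- p, 0) /\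
  (forall v, (onE Lam v /\ onF Lam v) <-> inSub Lam p v) /\
  (forall v, inSub Lam p v -> inKer Lam H v) /\
  (forall v, (onE Lam v /\ inKer Lam H v) <-> inSub Lam p v) /\
  (forall v, (onF Lam v /\ inKer Lam H v) <-> inSub Lam p v).
Proof.
move=> d_gt1 /lt0r_neq0 e_nondeg /lt0r_neq0 f_nondeg ordp ordq Lam H.
have d_gt0 := ltnW d_gt1.
have sub_ker v : inSub Lam p v -> inKer Lam H v.
  exact: (inSub_inKer e_nondeg f_nondeg ordp.1 ordq.1).
split; first exact: cong_q_opp_p.
split; first exact: onE_onFP.
split; first exact: sub_ker.
split=> v; split=> [[]|vS]; try by split; [case/onE_onFP: vS | exact: sub_ker].
- exact: (onE_inKer_inSub e_nondeg f_nondeg d_gt0 ordp ordq).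
- exact: (onF_inKer_inSub e_nondeg f_nondeg d_gt0 ordp ordq).
Qed.
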